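(* Let $m\ge2$, $n\ge1$ and $\mathcal T_{m,n}=\{(a_1:\cdots:a_n): a_i\in\mathbb Z,\ 0\le a_i\le m(n-i+1)-1\}=[0,nm-1]\times[0,(n-1)m-1]\times\cdots\times[0,m-1]$. The map $G(m,1,n)\to\mathcal T_{m,n}$, $w\mapsto \mathrm{Inv}(w)=(\mathrm{inv}_1(w):\cdots:\mathrm{inv}_n(w))$, is a bijection.
   Context: $\varepsilon=e^{2\pi i/m}$; $e_1,\dots,e_n$ the standard basis of $\mathbb C^n$. $G(m,1,n)$ is the group of $n\times n$ monomial matrices whose nonzero entries are $m$-th roots of unity; $w$ is written $w(j)=\varepsilon^{r_j}\beta_j$ ($\beta\in S_n$, $0\le r_j\le m-1$) and acts by $w(e_j)=\varepsilon^{r_j}e_{\beta_j}$. Let $\Phi=\{\varepsilon^ie_j-\varepsilon^ke_l:\varepsilon^ie_j\ne\varepsilon^ke_l,\ 0\le i,k\le m-1,\ 1\le j,l\le n\}$, $\Phi^+=\{\varepsilon^ie_j-\varepsilon^ke_j:0\le i<k\le m-1\}\cup\{e_j-\varepsilon^ke_l:0\le k\le m-1,\ 1\le l<j\le n\}\cup\{\varepsilon^ie_j-\varepsilon^ke_l: 0\le i,k\le m-1,\ k\ne0,\ 1\le j<l\le n\}$, $\Phi^-=\Phi\setminus\Phi^+$. For $i=1,\dots,n$, $\Delta_i=\{e_{n+1-i}-\varepsilon^ke_{n+1-i}:0<k\le m-1\}\cup\{e_{n+1-i}-\varepsilon^ke_j:0\le k\le m-1,\ j<n+1-i\}$ and $\mathrm{inv}_i(w)=|w(\Delta_i)\cap\Phi^-|$.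 *)

From HB Require Import structures.
From mathcomp Require Import all_boot all_order all_algebra all_fingroup.
Set Implicit Arguments. Unset Strict Implicit. Unset Printing Implicit Defensive.
Import GRing.Theory.

(* Indices are 0-based: the paper's e_j (1 <= j <= n) is e_(j-1), j-1 : 'I_n.
   Exponents of eps = e^(2 pi i/m) live in 'Z_m (we always assume 2 <= m,
   so 'Z_m has exactly m elements 0..m-1 with addition mod m). *)

(* An element w = (beta, r) of G(m,1,n): w(j) = eps^(r_j) beta_j,
   acting by w(e_j) = eps^(r_j) e_(beta_j). *)
Definition Gm1n (m n : nat) := ({perm 'I_n} * {ffun 'I_n -> 'Z_m})%type.

(* The formal symbol eps^i e_j is the pair (i, j). *)
Definition vec (m n : nat) := ('Z_m * 'I_n)%type.

(* The formal root eps^i e_j - eps^k e_l is the pair ((i,j),(k,l)). *)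
Definition root (m n : nat) := (vec m n * vec m n)%type.

Definition act (m n : nat) (w : Gm1n m n) (v : vec m n) : vec m n :=
  ((v.1 + w.2 v.2)%R, w.1 v.2).

Definition act_root (m n : nat) (w : Gm1n m n) (x : root m n) : root m n :=
  (act w x.1, act w x.2).

Definition Phi (m n : nat) : {set root m n} := [set x | x.1 != x.2].

Definition is_pos (m n : nat) (x : root m n) : bool :=
  let: ((i, j), (k, l)) := x in
  [|| (j == l) && (nat_of_ord i < nat_of_ord k)%N,
      (i == 0%R) && (nat_of_ord l < nat_of_ord j)%N
    | (k != 0%R) && (nat_of_ord j < nat_of_ord l)%N].

Definition PhiPos (m n : nat) : {set root m n} := [set x in Phi m n | is_pos x].

Definition PhiNeg (m n : nat) : {set root m n} := Phi m n :\: PhiPos m n.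

Definition Delta_at (m n : nat) (p : 'I_n) : {set root m n} :=
  [set x | (x.1 == (0%R, p)) &&
           (((x.2.2 == p) && (x.2.1 != 0%R)) || (nat_of_ord x.2.2 < nat_of_ord p)%N)].

(* The paper's Delta_i (1 <= i <= n) uses the index n+1-i; with i0 = i-1 : 'I_n
   this is the 0-based index n-1-i0 = rev_ord i0. *)
Definition Delta (m n : nat) (i0 : 'I_n) : {set root m n} := Delta_at m (rev_ord i0).

Definition inv (m n : nat) (w : Gm1n m n) (i0 : 'I_n) : nat :=
  #|[set act_root w x | x in Delta m i0] :&: PhiNeg m n|.

Definition Inv (m n : nat) (w : Gm1n m n) : {ffun 'I_n -> nat} :=
  [ffun i0 => inv w i0].

(* T_{m,n}: a_(i0) in [0, m(n - i0) - 1] (paper: a_i in [0, m(n-i+1)-1]). *)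
Definition in_T (m n : nat) (a : {ffun 'I_n -> nat}) : Prop :=
  forall i0 : 'I_n, (a i0 < m * (n - i0))%N.
Arguments in_T : clear implicits.

From Pilot Require Import Defs.
From mathcomp Require Import all_boot all_order all_algebra all_fingroup.
From mathcomp Require Import zify.
Set Implicit Arguments. Unset Strict Implicit. Unset Printing Implicit Defensive.
Import GRing.Theory.

(* Write w = (beta, r) and let p = n-1-i0 be the 0-based index with
   Delta_(i0+1) = Delta_at p.  Counting the roots e_p - y of Delta_at p
   whose image under w is negative, column by column, gives (inv_formula)
       inv_(i0+1)(w) = r_p + (p - L_p) + [r_p <> 0] * m * L_p,
   where L_p = #{l < p | beta l < beta p} is the p-th entry of the Lehmer
   code of beta: the roots e_p - eps^k e_p contribute r_p, and for l < p the
   roots e_p - eps^k e_l contribute m * [r_p <> 0] if beta l < beta p and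
   exactly 1 otherwise.  The right-hand side, [inv_value m p r_p L_p],
   is < m(p+1) = m(n-i0) and can be decoded back into (r_p, L_p) by a
   Euclidean division by m-1 (decode_inv_value).  Since a permutation is
   determined by its Lehmer code (lehmer_code_inj), Inv is injective; as
   |G(m,1,n)| = n! m^n = |T_{m,n}|, it is onto T_{m,n} as well. *)

Lemma sum_nat_lt (N v : nat) : \sum_(0 <= i < N) (i < v : nat) = minn N v.
Proof.
elim: N => [|N IH]; first by rewrite big_geq // min0n.
by rewrite big_nat_recr //= IH; case: ltnP => H; lia.
Qed.

Lemma sum_ord_lt (N v : nat) : v <= N -> \sum_(i < N) (i < v : nat) = v.
Proof.
by move=> le_vN; rewrite -(big_mkord xpredT (fun i => (i < v : nat))) sum_nat_lt; lia.
Qed.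

Lemma sum_perm_lt (n : nat) (b : {perm 'I_n}) (v : nat) :
  v <= n -> \sum_(l : 'I_n) (b l < v : nat) = v.
Proof.
move=> le_vn; rewrite -[RHS](sum_ord_lt le_vn).
by rewrite [RHS](reindex_inj (h := b) (@perm_inj _ b)).
Qed.

Lemma sum_ord_split3 (n : nat) (p : 'I_n) (F : 'I_n -> nat) :
  \sum_(l : 'I_n) F l =
  \sum_(l : 'I_n | l < p) F l + F p + \sum_(l : 'I_n | p < l) F l.
Proof.
rewrite (bigD1 p) //= (bigID (fun l : 'I_n => l < p)) /= addnA [F p + _]addnC.
congr (_ + _ + _); apply: eq_bigl => l; rewrite -val_eqE /=.
  by case: ltngtP.
by rewrite -leqNgt ltn_neqAle eq_sym.
Qed.

Lemma card_set_sum (T : finType) (P : pred T) :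
  #|[set x | P x]| = \sum_x (P x : nat).
Proof. by rewrite -sum1dep_card big_mkcond; apply: eq_bigr => x _; case: (P x). Qed.

Section LehmerCode.
Variable n : nat.

Definition lehmer (b : {perm 'I_n}) (p : 'I_n) : nat :=
  \sum_(l : 'I_n | l < p) (b l < b p : nat).

(* If b and b' agree above p and have the same code at p, then b p < b' p is
   impossible: b would send one more index below b' p than b' does. *)
Lemma lehmer_step (b b' : {perm 'I_n}) (p : 'I_n) :
  (forall l : 'I_n, p < l -> b l = b' l) -> lehmer b p = lehmer b' p ->
  ~ b p < b' p.
Proof.
move=> eq_above eq_code lt_bp.
have count' := sum_perm_lt b' (ltnW (ltn_ord (b' p))).
rewrite (sum_ord_split3 p) ltnn addn0 in count'.
have count := sum_perm_lt b (ltnW (ltn_ord (b' p))).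
rewrite (sum_ord_split3 p) lt_bp in count.
have same_above : \sum_(l : 'I_n | p < l) (b' l < b' p : nat) =
                  \sum_(l : 'I_n | p < l) (b l < b' p : nat).
  by apply: eq_bigr => l lt_pl; rewrite eq_above.
have below : lehmer b p <= \sum_(l : 'I_n | l < p) (b l < b' p : nat).
  apply: leq_sum => l _; case: (ltnP (b l) (b p)) => // lt_lp.
  by rewrite (ltn_trans lt_lp lt_bp).
rewrite /lehmer in eq_code below; lia.
Qed.

Lemma lehmer_code_inj (b b' : {perm 'I_n}) : lehmer b =1 lehmer b' -> b = b'.
Proof.
move=> eq_code; apply/permP.
suff eq_above k (p : 'I_n) : n - p <= k -> b p = b' p.
  by move=> p; apply: (eq_above n); lia.
elim: k p => [|k IH] p le_k; first by move: (ltn_ord p) le_k; lia.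
have IHp (l : 'I_n) : p < l -> b l = b' l by move=> lt_pl; apply: IH; lia.
case: (ltngtP (b p) (b' p)) => [lt_bp|lt_bp|/val_inj //].
  by case: (lehmer_step IHp (eq_code p)).
by case: (lehmer_step (fun l lt_pl => esym (IHp l lt_pl)) (esym (eq_code p))).
Qed.

Lemma lehmer_compl (b : {perm 'I_n}) (p : 'I_n) :
  lehmer b p + \sum_(l : 'I_n | l < p) (b p < b l : nat) = p.
Proof.
rewrite /lehmer -big_split /= -[RHS](sum_ord_lt (ltnW (ltn_ord p))) big_mkcond /=.
apply: eq_bigr => l _; case: ifP => lt_lp //.
case: ltngtP => // /val_inj/perm_inj eq_lp.
by rewrite eq_lp ltnn in lt_lp.
Qed.

Lemma lehmer_le (b : {perm 'I_n}) (p : 'I_n) : lehmer b p <= p.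
Proof. by rewrite -[X in _ <= X](lehmer_compl b p) leq_addr. Qed.

End LehmerCode.

(* The value of inv at index p, as a function of r = r_p and of the Lehmer
   entry l = L_p, with the complementary count p - l of inversions. *)
Definition inv_value (m p r l : nat) : nat := r + (p - l) + (r != 0) * m * l.

(* Inverse of inv_value: values <= p come from r = 0; larger values v encode
   v - p - 1 = (r - 1) + (m - 1) * l. *)
Definition decode_value (m p v : nat) : nat * nat :=
  if v <= p then (0, p - v)
  else (((v - p - 1) %% (m - 1)).+1, (v - p - 1) %/ (m - 1)).

Lemma inv_valueS (m p r l : nat) : 0 < m -> l <= p ->
  inv_value m p r.+1 l = p.+1 + (r + l * (m - 1)).
Proof.
case: m => // q _ le_lp; rewrite /inv_value /= mul1n subSS subn0 mulSn mulnC.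
lia.
Qed.

(* Since 0 <= r - 1 < m - 1, the pair (r, l) is recovered from the value. *)
Lemma decode_inv_value (m p r l : nat) : 1 < m -> r < m -> l <= p ->
  decode_value m p (inv_value m p r l) = (r, l).
Proof.
move=> m_gt1 lt_rm le_lp; rewrite /decode_value.
case: r lt_rm => [|r] lt_rm.
  by rewrite /inv_value /= mul0n !addn0 leq_subr subKn.
rewrite inv_valueS ?(ltnW m_gt1) // leqNgt ltn_addr //=.
have -> : p.+1 + (r + l * (m - 1)) - p - 1 = l * (m - 1) + r.
  by rewrite -subnDA addn1 addnC addnK addnC.
have m1_gt0 : 0 < m - 1 by lia.
rewrite modnMDl divnMDl // modn_small ?divn_small ?addn0 //; lia.
Qed.

Lemma inv_value_lt (m p r l : nat) : 1 < m -> r < m -> l <= p ->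
  inv_value m p r l < m * p.+1.
Proof.
move=> m_gt1 lt_rm le_lp; case: r lt_rm => [|r] lt_rm.
  by rewrite /inv_value /= mul0n !addn0; nia.
by rewrite inv_valueS ?(ltnW m_gt1) //; nia.
Qed.

Section InversionCount.
Variables (m n : nat) (m_gt1 : 1 < m).
Implicit Type w : Gm1n m n.

(* Since 1 < m, 'Z_m has exactly the m exponents 0, ..., m - 1. *)
Lemma Zm_lt (x : 'Z_m) : (x : nat) < m.
Proof. by case: x => x /=; rewrite Zp_cast. Qed.

Lemma card_Zm : #|{: 'Z_m}| = m.
Proof. by rewrite card_ord Zp_cast. Qed.

Lemma actE w (i : 'Z_m) (j : 'I_n) : Defs.act w (i, j) = ((i + w.2 j)%R, w.1 j).
Proof. by []. Qed.

Lemma PhiNegE (x : Defs.root m n) :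
  (x \in PhiNeg m n) = (x.1 != x.2) && ~~ is_pos x.
Proof. by rewrite !inE; case: (x.1 != x.2); rewrite ?andbT ?andbF. Qed.

Lemma act_root_inj w : injective (act_root w).
Proof.
move=> [[i j] [k l]] [[i' j'] [k' l']]; rewrite /act_root !actE.
case=> eq_i /perm_inj eq_j eq_k /perm_inj eq_l; subst j' l'.
have eq_i' : (i + w.2 j)%R = (i' + w.2 j)%R :> 'Z_m by apply: val_inj.
have eq_k' : (k + w.2 l)%R = (k' + w.2 l)%R :> 'Z_m by apply: val_inj.
by rewrite (addIr _ eq_i') (addIr _ eq_k').
Qed.

Definition neg_in_Delta w (p : 'I_n) (y : vec m n) : nat :=
  (((0%R, p), y) \in Delta_at m p) && (act_root w ((0%R, p), y) \in PhiNeg m n).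

Lemma neg_in_DeltaE w p (k : 'Z_m) (l : 'I_n) : neg_in_Delta w p (k, l) =
  (((l == p) && (k != 0%R)) || (l < p)) &&
  (((w.2 p, w.1 p) != ((k + w.2 l)%R, w.1 l)) &&
   ~~ [|| (w.1 p == w.1 l) && (nat_of_ord (w.2 p) < nat_of_ord (k + w.2 l)%R),
          (w.2 p == 0%R) && (w.1 l < w.1 p)
        | ((k + w.2 l)%R != 0%R) && (w.1 p < w.1 l)]).
Proof. by rewrite /neg_in_Delta inE PhiNegE /act_root !actE add0r /= eqxx. Qed.

Lemma neg_in_Delta_above w (p l : 'I_n) (k : 'Z_m) :
  p < l -> neg_in_Delta w p (k, l) = 0.
Proof.
move=> lt_pl; rewrite neg_in_DeltaE.
have [eq_lp|_] := eqVneq l p; first by rewrite eq_lp ltnn in lt_pl.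
by rewrite ltnNge (ltnW lt_pl).
Qed.

(* Column p: e_p - eps^k e_p becomes negative iff 0 < k and the exponent
   r_p + k wraps around modulo m, i.e. for exactly r_p values of k. *)
Lemma sum_neg_in_Delta_diag w (p : 'I_n) :
  \sum_(k : 'Z_m) neg_in_Delta w p (k, p) = w.2 p.
Proof.
have wrap (k : 'Z_m) : neg_in_Delta w p (k, p) =
    ((k != 0%R) && ~~ (nat_of_ord (w.2 p) < nat_of_ord (k + w.2 p)%R) : nat).
  rewrite neg_in_DeltaE !eqxx !ltnn !andbF !orbF /= xpair_eqE eqxx andbT.
  have [->|k_neq0] := eqVneq k 0%R; first by rewrite add0r eqxx.
  rewrite -[X in X == _]add0r (inj_eq (addIr _)) eq_sym (negbTE k_neq0).
  by [].
rewrite (reindex_inj (h := fun c : 'Z_m => (c - w.2 p)%R) (addIr _)) /=.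
under eq_bigr => c _ do rewrite wrap subrK subr_eq0.
rewrite -[RHS](sum_ord_lt (ltnW (ltn_ord (w.2 p)))).
apply: eq_bigr => c _.
case: (ltngtP c (w.2 p)) => [lt_c|gt_c|/val_inj ->] /=; last by rewrite eqxx.
  by rewrite andbT; case: eqVneq lt_c => // ->; rewrite ltnn.
by rewrite andbF.
Qed.

(* Column l < p: if beta l < beta p, all m roots e_p - eps^k e_l become
   negative when r_p <> 0 and none do when r_p = 0; otherwise exactly the one
   with eps^(k + r_l) = 1 does. *)
Lemma sum_neg_in_Delta_below w (p l : 'I_n) : l < p ->
  \sum_(k : 'Z_m) neg_in_Delta w p (k, l) =
  if w.1 l < w.1 p then (w.2 p != 0%R) * m else 1.
Proof.
move=> lt_lp.
have beta_neq : (w.1 p == w.1 l) = false.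
  by apply/negbTE/eqP => /perm_inj eq_pl; rewrite eq_pl ltnn in lt_lp.
have column (k : 'Z_m) : neg_in_Delta w p (k, l) =
    if w.1 l < w.1 p then (w.2 p != 0%R : nat) else ((k + w.2 l)%R == 0%R : nat).
  rewrite neg_in_DeltaE lt_lp orbT /= xpair_eqE beta_neq andbF /=.
  case: ltngtP => [lt_b|lt_b|/val_inj eq_b]; last by rewrite eq_b eqxx in beta_neq.
    by rewrite andbT andbF orbF.
  by rewrite andbF andbT orFb negbK.
under eq_bigr => k _ do rewrite column.
case: ifP => _; first by rewrite sum_nat_const card_Zm mulnC.
rewrite (reindex_inj (h := fun c : 'Z_m => (c - w.2 l)%R) (addIr _)) /=.
under eq_bigr => c _ do rewrite subrK.
by rewrite (bigD1 0%R) // big1 //= => c /negbTE ->.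
Qed.

Lemma card_neg_image w (p : 'I_n) :
  #|[set act_root w x | x in Delta_at m p] :&: PhiNeg m n| =
  \sum_(l : 'I_n) \sum_(k : 'Z_m) neg_in_Delta w p (k, l).
Proof.
have -> : [set act_root w x | x in Delta_at m p] :&: PhiNeg m n =
    act_root w @: [set x | (x \in Delta_at m p) && (act_root w x \in PhiNeg m n)].
  apply/setP => y; rewrite in_setI; apply/andP/imsetP.
    by case=> /imsetP[x Dx ->] Nx; exists x; rewrite // inE Dx Nx.
  by case=> x; rewrite inE => /andP[Dx Nx] ->; split => //; apply: imset_f.
rewrite card_imset; last exact: act_root_inj.
rewrite card_set_sum.
transitivity (\sum_(x1 : vec m n) \sum_(x2 : vec m n)
    (((x1, x2) \in Delta_at m p) && (act_root w (x1, x2) \in PhiNeg m n) : nat)).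
  by rewrite pair_bigA; apply: eq_bigr => -[x1 x2] _.
rewrite (bigD1 (0%R, p)) //= [X in _ + X]big1 ?addn0; last first.
  by move=> x1 x1_neq; apply: big1 => x2 _; rewrite inE /= (negbTE x1_neq).
by rewrite exchange_big pair_bigA; apply: eq_bigr => -[k l] _.
Qed.

Lemma inv_formula w (i0 : 'I_n) :
  Defs.inv w i0 = inv_value m (rev_ord i0) (w.2 (rev_ord i0)) (lehmer w.1 (rev_ord i0)).
Proof.
rewrite /Defs.inv /Delta card_neg_image; move: (rev_ord i0) => p.
rewrite (sum_ord_split3 p) sum_neg_in_Delta_diag [X in _ + X]big1 ?addn0; last first.
  by move=> l lt_pl; apply: big1 => k _; rewrite neg_in_Delta_above.
under eq_bigr => l lt_lp do rewrite sum_neg_in_Delta_below //.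
have split_below : \sum_(l : 'I_n | l < p)
      (if w.1 l < w.1 p then (w.2 p != 0%R) * m else 1) =
    (w.2 p != 0%R) * m * lehmer w.1 p + \sum_(l : 'I_n | l < p) (w.1 p < w.1 l : nat).
  rewrite big_distrr -big_split /=; apply: eq_bigr => l lt_lp.
  case: (ltngtP (w.1 l) (w.1 p)) => [_|_|/val_inj/perm_inj eq_lp].
  - by rewrite /= muln1 addn0.
  - by rewrite /= muln0.
  - by rewrite eq_lp ltnn in lt_lp.
rewrite split_below; have -> : \sum_(l : 'I_n | l < p) (w.1 p < w.1 l : nat) = p - lehmer w.1 p.
  by have := lehmer_compl w.1 p; rewrite /lehmer; lia.
by rewrite /inv_value -val_eqE /=; lia.
Qed.

Lemma inv_lt w (i0 : 'I_n) : Defs.inv w i0 < m * (n - i0).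
Proof.
rewrite inv_formula -subnSK //.
exact: inv_value_lt m_gt1 (Zm_lt _) (lehmer_le _ _).
Qed.

(* Inv determines r_p and the Lehmer code of beta at every p, hence w. *)
Lemma Inv_inj : injective (@Inv m n).
Proof.
move=> [b r] [b' r'] eq_Inv.
have decoded (p : 'I_n) : (r p : nat, lehmer b p) = (r' p : nat, lehmer b' p).
  have := congr1 (fun a : {ffun 'I_n -> nat} => a (rev_ord p)) eq_Inv.
  rewrite /= !ffunE !inv_formula rev_ordK => /(congr1 (decode_value m p)).
  by rewrite !decode_inv_value ?Zm_lt ?lehmer_le.
have -> : r = r' by apply/ffunP => p; case: (decoded p) => /val_inj.
by rewrite (@lehmer_code_inj _ b b') // => p; case: (decoded p).
Qed.

End InversionCount.

Lemma inj_card_onto (A B : finType) (f : A -> B) (S : {set B}) :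
  injective f -> (forall a, f a \in S) -> #|S| <= #|A| ->
  forall b, b \in S -> exists a, f a = b.
Proof.
move=> f_inj f_S le_SA b Sb.
have /eqP eq_img : f @: setT == S.
  rewrite eqEcard card_imset // cardsT le_SA andbT.
  by apply/subsetP => _ /imsetP[a _ ->].
by move: Sb; rewrite -eq_img => /imsetP[a _ ->]; exists a.
Qed.

Lemma prod_rev_fact (n : nat) : \prod_(i < n) (n - i) = n`!.
Proof.
rewrite fact_prod big_add1 /= big_rev_mkord subn0.
by apply: eq_bigr => i _; move: (ltn_ord i); lia.
Qed.

Lemma card_Gm1n (m n : nat) : 1 < m -> #|{: Gm1n m n}| = n`! * m ^ n.
Proof. by move=> m_gt1; rewrite card_prod card_Sn card_ffun !card_ord Zp_cast // mulnC. Qed.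

Definition T_set (m n : nat) : {set {ffun 'I_n -> 'I_(m * n)}} :=
  [set a : {ffun 'I_n -> 'I_(m * n)} | [forall i, a i < m * (n - i)]].

Lemma card_T_set (m n : nat) : #|T_set m n| = n`! * m ^ n.
Proof.
pose F (i : 'I_n) := [set k : 'I_(m * n) | k < m * (n - i)].
rewrite (eq_card (B := family F)); last first.
  by move=> a; rewrite inE; apply/forallP/familyP => a_T i; have := a_T i; rewrite inE.
rewrite card_family foldrE big_map big_enum /=.
transitivity (\prod_(i < n) (m * (n - i))).
  apply: eq_bigr => i _; rewrite card_set_sum sum_ord_lt //.
  by rewrite leq_mul2l leq_subr orbT.
by rewrite big_split /= prod_nat_const card_ord prod_rev_fact mulnC.
Qed.

Section Counting.
Variables (m n : nat) (m_gt1 : 1 < m).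

Lemma inv_lt_mn (w : Gm1n m n) (i : 'I_n) : Defs.inv w i < m * n.
Proof. by apply: leq_trans (inv_lt m_gt1 w i) _; rewrite leq_mul2l leq_subr orbT. Qed.

Definition Inv_ord (w : Gm1n m n) : {ffun 'I_n -> 'I_(m * n)} :=
  [ffun i => Ordinal (inv_lt_mn w i)].

Lemma Inv_ord_inj : injective Inv_ord.
Proof.
move=> w w' eq_w; apply: (Inv_inj m_gt1); apply/ffunP => i.
by have := congr1 (fun a : {ffun 'I_n -> 'I_(m * n)} => nat_of_ord (a i)) eq_w; rewrite !ffunE.
Qed.

Lemma Inv_ord_T (w : Gm1n m n) : Inv_ord w \in T_set m n.
Proof. by rewrite inE; apply/forallP => i; rewrite ffunE; exact: inv_lt. Qed.

End Counting.

Theorem proposition4p1 (m n : nat) (hm : (2 <= m)%N) (hn : (1 <= n)%N) :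
  (forall w : Gm1n m n, in_T m n (Inv w)) /\
  (forall a : {ffun 'I_n -> nat}, in_T m n a -> exists! w : Gm1n m n, Inv w = a).
Proof.
split=> [w i0 | a a_T]; first by rewrite ffunE; exact: inv_lt.
have a_lt i : a i < m * n.
  by apply: leq_trans (a_T i) _; rewrite leq_mul2l leq_subr orbT.
pose a_ord := [ffun i => Ordinal (a_lt i)].
have a_ord_T : a_ord \in T_set m n.
  by rewrite inE; apply/forallP => i; rewrite ffunE; exact: a_T.
have le_TG : #|T_set m n| <= #|{: Gm1n m n}| by rewrite card_T_set card_Gm1n.
have [w Inv_w] := inj_card_onto (@Inv_ord_inj _ _ hm) (@Inv_ord_T _ _ hm) le_TG a_ord_T.
have Inv_wa : Inv w = a.
  apply/ffunP => i; have := congr1 (fun b : {ffun 'I_n -> 'I_(m * n)} => nat_of_ord (b i)) Inv_w.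
  by rewrite !ffunE.
by exists w; split=> // w' Inv_w'; apply: (Inv_inj hm); rewrite Inv_wa Inv_w'.
Qed.
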